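(* Let $F\in\mathbb{R}^{K\times n}$ be a class indicator matrix, let $W\in\mathbb{R}^{r\times n}$ ($r\le n$) be an entrywise nonnegative similarity matrix with all column sums positive, $S=\operatorname{diag}(\mathbf{1}^TW)$, and $\tilde W=WS^{-1}$. Assume $\tilde W$ has full row rank $r$ and let $X^*=F\tilde W^T(\tilde W\tilde W^T)^{-1}$. Then each column of $X^*$ sums to one: $\mathbf{1}^TX^*=\mathbf{1}^T$.
   Context: $\mathbf{1}$ denotes the all-ones vector of appropriate length. The columns of $F$ are standard basis vectors $e_k\in\mathbb{R}^K$, $F_j=e_k$ meaning training sample $j$ is in class $k$. $W_{ij}$ is the similarity (e.g. a Gaussian kernel value $\exp\{-\|G_i-A_j\|_2^2/(2\sigma^2)\}$) between the $i$th basis vector $G_i$ and the $j$th training sample $A_j$; thus each column of $\tilde W$ sums to one. $X^*$ is the minimizer of the normalized RBF network objective $\|F-X\tilde W\|_F^2$. *)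

From mathcomp Require Import all_boot all_order all_algebra.
Set Implicit Arguments. Unset Strict Implicit. Unset Printing Implicit Defensive.
Import Order.TTheory GRing.Theory Num.Theory.
Local Open Scope ring_scope.

Definition class_indicator (R : ringType) (K n : nat) (F : 'M[R]_(K, n)) : Prop :=
  forall j : 'I_n, exists k : 'I_K, forall i : 'I_K, F i j = (i == k)%:R.

Definition colsum_diag (R : ringType) (r n : nat) (W : 'M[R]_(r, n)) : 'M[R]_n :=
  diag_mx (const_mx 1 *m W).

Definition Wtilde (R : comUnitRingType) (r n : nat) (W : 'M[R]_(r, n)) : 'M[R]_(r, n) :=
  W *m invmx (colsum_diag W).

Definition Xstar (R : comUnitRingType) (K r n : nat) (F : 'M[R]_(K, n))
  (W : 'M[R]_(r, n)) : 'M[R]_(K, r) :=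
  F *m (Wtilde W)^T *m invmx (Wtilde W *m (Wtilde W)^T).

From mathcomp Require Import all_boot all_order all_algebra.
Set Implicit Arguments. Unset Strict Implicit. Unset Printing Implicit Defensive.
Import Order.TTheory GRing.Theory Num.Theory.
Local Open Scope ring_scope.

(* Column sums are preserved by each factor of X*: 1^T F = 1^T because the
   columns of F are basis vectors, and 1^T W~ = 1^T because S^{-1} divides each
   column of W by its sum.  Hence 1^T X* = 1^T W~ W~^T (W~ W~^T)^{-1} = 1^T, the
   Gram matrix W~ W~^T being invertible since W~ has full row rank over an
   ordered field. *)

Lemma const1_mulmxE (R : pzSemiRingType) (m n : nat) (A : 'M[R]_(m, n))
    (i : 'I_1) (j : 'I_n) :
  (const_mx 1 *m A) i j = \sum_(k < m) A k j.
Proof. by rewrite mxE; apply: eq_bigr => k _; rewrite mxE mul1r. Qed.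

Lemma const1_mulmx_class_indicator (R : nzRingType) (K n : nat)
    (F : 'M[R]_(K, n)) :
  class_indicator F -> const_mx 1 *m F = const_mx 1 :> 'rV_n.
Proof.
move=> hF; apply/matrixP => i j; have [k Fj] := hF j.
rewrite const1_mulmxE mxE (bigD1 k) //= Fj eqxx big1 ?addr0 // => l /negbTE lk.
by rewrite Fj lk.
Qed.

Section Normalization.
Variables (R : comUnitRingType) (r n : nat) (W : 'M[R]_(r, n)).

Lemma colsum_diag_unitmx :
  (forall j : 'I_n, \sum_(i < r) W i j \is a GRing.unit) ->
  colsum_diag W \in unitmx.
Proof.
move=> hW; rewrite unitmxE det_diag; apply: unitr_prod => j _.
by rewrite const1_mulmxE.
Qed.

Lemma const1_mulmx_Wtilde :
  colsum_diag W \in unitmx -> const_mx 1 *m Wtilde W = const_mx 1 :> 'rV_n.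
Proof.
move=> hS; rewrite /Wtilde mulmxA; apply: (canLR (mulmxK hS)).
by rewrite mul_mx_diag; apply/matrixP => i j; rewrite (ord1 i) !mxE mul1r.
Qed.

End Normalization.

Lemma mulmx_trmx_eq0 (R : realDomainType) (m p : nat) (A : 'M[R]_(m, p)) :
  A *m A^T = 0 -> A = 0.
Proof.
move=> AAt0; apply/matrixP => i j; rewrite mxE.
have /eqP := congr1 (fun M : 'M[R]_m => M i i) AAt0; rewrite !mxE.
under eq_bigr do rewrite mxE -expr2.
rewrite psumr_eq0 => [/allP/(_ j (mem_index_enum _))|k _]; last exact: sqr_ge0.
by rewrite /= sqrf_eq0 => /eqP.
Qed.

Lemma unitmx_mulmx_trmx (R : realFieldType) (m p : nat) (A : 'M[R]_(m, p)) :
  row_free A -> A *m A^T \in unitmx.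
Proof.
move=> freeA; rewrite -row_free_unit -kermx_eq0; apply/eqP.
set N := kermx _.
have NA_gram0 : N *m A *m (N *m A)^T = 0.
  by rewrite trmx_mul mulmxA -(mulmxA N) mulmx_ker mul0mx.
by apply/eqP; rewrite -(mulmx_free_eq0 _ freeA); apply/eqP/mulmx_trmx_eq0.
Qed.

Theorem lemma1 (R : realFieldType) (K r n : nat)
  (F : 'M[R]_(K, n)) (W : 'M[R]_(r, n))
  (hF : class_indicator F)
  (hrn : (r <= n)%N)
  (hW0 : forall (i : 'I_r) (j : 'I_n), 0 <= W i j)
  (hWpos : forall j : 'I_n, 0 < \sum_(i < r) W i j)
  (hrank : \rank (Wtilde W) = r) :
  const_mx 1 *m Xstar F W = const_mx 1 :> 'rV[R]_r.
Proof.
have hS : colsum_diag W \in unitmx.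
  by apply: colsum_diag_unitmx => j; rewrite unitfE lt0r_neq0.
have hgram : Wtilde W *m (Wtilde W)^T \in unitmx.
  by apply: unitmx_mulmx_trmx; apply/eqP.
rewrite /Xstar !mulmxA const1_mulmx_class_indicator //.
by rewrite -(const1_mulmx_Wtilde hS) -(mulmxA _ (Wtilde W)) mulmxK.
Qed.
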